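(* Let $0<w_1<\dots<w_n$ be integers with $\sum_i w_i<2^n-1$, and let $2^{n/2}\le\Delta\le d<2^n$. Let $j\in\{0,\dots,n-1\}$ satisfy $\#\{t:f_t>2^j\}>\frac{\Delta}{2^{j+1}n}$. Set $h=2^j+1$, $m=\lceil \Delta/(2^{j+1}n)\rceil$ and $X=\{t: f_t\ge h\}$, so that $|X|\ge m$. Let $P$ be a parameter with $2\le P\le 2m$, and set $k=\lceil m/(4P)\rceil$. Choose a uniformly random prime $p\in[P,2P]$ and then a uniformly random $r^*\in\mathbb{Z}_p$. For $r\in\mathbb{Z}_p$ let $B_r=\{S\subseteq[n]: w(S)\equiv r\pmod p\}$. Then with probability at least $\Omega(1/n)$ over the choice of $p$ and $r^*$, there are at least $k$ integers $t\in\mathbb{N}$ with $\#\{S\in B_{r^*}: w(S)=t\}\ge h$.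
   Context: Write $[n]=\{1,\dots,n\}$ and $w(S)=\sum_{i\in S}w_i$. The frequency is $f_t=\#\{S\subseteq[n]:w(S)=t\}$. The parameter is $d=\sum_{0\le t<2^n}\max\{0,f_t-1\}$. The constant in $\Omega(\cdot)$ is absolute. *)

From HB Require Import structures.
From mathcomp Require Import all_boot all_order all_algebra.
From mathcomp Require Import reals.
Set Implicit Arguments. Unset Strict Implicit. Unset Printing Implicit Defensive.
Import Order.TTheory GRing.Theory Num.Theory.

Definition wS (n : nat) (w : 'I_n -> nat) (S : {set 'I_n}) : nat :=
  \sum_(i in S) w i.

Definition freq (n : nat) (w : 'I_n -> nat) (t : nat) : nat :=
  #|[set S : {set 'I_n} | wS w S == t]|.

(* d = sum_{0 <= t < 2^n} max(0, f_t - 1)  (nat subtraction is truncated) *)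
Definition dpar (n : nat) (w : 'I_n -> nat) : nat :=
  \sum_(t < 2 ^ n) (freq w t - 1).

(* #{t : f_t > 2^j}; t ranges over [0, 2^n), which contains every value w(S)
   since sum_i w_i < 2^n - 1, so f_t = 0 outside this range. *)
Definition num_heavy (n : nat) (w : 'I_n -> nat) (j : nat) : nat :=
  #|[set t : 'I_(2 ^ n) | 2 ^ j < freq w t]|.

Definition freq_mod (n : nat) (w : 'I_n -> nat) (p r t : nat) : nat :=
  #|[set S : {set 'I_n} | (wS w S == t) && (wS w S %% p == r)]|.

Definition num_good_t (n : nat) (w : 'I_n -> nat) (p r h : nat) : nat :=
  #|[set t : 'I_(2 ^ n) | h <= freq_mod w p r t]|.

Definition primes_in (P : nat) : seq nat :=
  [seq q <- iota P P.+1 | prime q].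

(* Probability, over uniform prime p in [P,2P] and then uniform r* in Z_p,
   that at least k integers t have #{S in B_{r*} : w(S) = t} >= h. *)
Definition success_prob (R : realType) (n : nat) (w : 'I_n -> nat)
    (P h : nat) (k : int) : R :=
  ((size (primes_in P))%:R)^-1 *
  \sum_(p <- primes_in P)
     ((#|[set r : 'I_p | k <= (num_good_t w p r h)%:Z]|)%:R / p%:R).

From HB Require Import structures.
From mathcomp Require Import all_boot all_order all_algebra.
From mathcomp Require Import reals.
From mathcomp Require Import zify ring lra.
Import Order.TTheory GRing.Theory Num.Theory.
Set Implicit Arguments. Unset Strict Implicit. Unset Printing Implicit Defensive.

(* Let X be the set of sums t < 2^n with f_t > 2^j, so |X| >= m; every t in X is
   good for B_r with r = t mod p, so it suffices that many classes r mod p contain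
   at least k elements of X.  For a prime p write c_r = #{t in X | t = r mod p}.
   The classes with c_r < k hold at most p (k - 1) <= |X| / 2 elements, so expanding
   (1 - mu c_r)^2 over the remaining classes gives, for every mu >= 0,
   #{r | c_r >= k} >= mu |X| - mu^2 sum_r c_r^2.  Two distinct t, t' < 2^n are
   congruent modulo fewer than n / log2 P primes p >= P, since the product of these
   primes divides t - t'; hence over the N primes of [P, 2P] the second moments sum
   to at most |X| (N + |X| n / log2 P).  Choosing mu and averaging over p and r
   bounds the probability below by N / (8 P (3 + n / log2 P)), and Chebyshev's
   estimate N >= P / (C log2 P), proved as in Erdos' proof of Bertrand's postulate,
   makes this Omega(1 / n). *)

(** * Chebyshev's bound for the primes in [P, 2P] *)

Lemma sum_le1_le_support (t : nat -> nat) e b :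
  (forall k, t k <= 1) -> (forall k, e < k -> t k = 0) ->
  \sum_(1 <= k < b) t k <= e.
Proof.
move=> t_le1 t_eq0.
suff: \sum_(1 <= k < b) t k <= minn b.-1 e by move/leq_trans; apply; apply: geq_minr.
elim: b => [|[|b] IH]; [by rewrite big_geq | by rewrite big_geq |].
rewrite big_nat_recr //=.
case: (leqP b.+1 e) => hb; first by have := t_le1 b.+1; move: IH => /=; lia.
by rewrite t_eq0 // addn0; move: IH => /=; lia.
Qed.

Lemma coprime_prime_fact p m : prime p -> m < p -> coprime p m`!.
Proof.
move=> p_pr; elim: m => [|m IH] lt_mp; first by rewrite coprimen1.
rewrite factS coprimeMr IH ?andbT; last exact: ltnW.
by rewrite prime_coprime // gtnNdvd.
Qed.

Lemma prod_uniq_primes_dvd (s : seq nat) d :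
  uniq s -> all prime s -> all (dvdn^~ d) s -> \prod_(p <- s) p %| d.
Proof.
elim: s => [|p s IH] /=; first by rewrite big_nil dvd1n.
move=> /andP[p_s s_uniq] /andP[p_pr s_pr] /andP[p_d s_d].
rewrite big_cons Gauss_dvd ?p_d ?IH // prime_coprime // Euclid_dvd_prod // big_has.
apply/hasPn => q q_s; apply: contraNN p_s.
by rewrite (dvdn_prime2 p_pr (allP s_pr q q_s)) => /eqP ->.
Qed.

Lemma double_divn_bounds m q : 0 < q ->
  (m %/ q).*2 <= m.*2 %/ q <= (m %/ q).*2 + 1.
Proof.
move=> q_gt0; apply/andP; split.
  by rewrite leq_divRL //; have := leq_divM m q; lia.
rewrite -ltnS addn1 ltn_divLR //; have := ltn_ceil m q_gt0; nia.
Qed.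

(* The k-th Legendre term of the p-adic valuation of 'C(2P, P). *)
Definition central_carry P p k := P.*2 %/ p ^ k - (P %/ p ^ k).*2.

Lemma central_carry_le1 P p k : 0 < p -> central_carry P p k <= 1.
Proof.
move=> p_gt0; have pk_gt0 : 0 < p ^ k by rewrite expn_gt0 p_gt0.
by have := double_divn_bounds P pk_gt0; rewrite /central_carry; lia.
Qed.

Lemma central_carry_eq0 P p k : 0 < p -> P.*2 < p ^ k -> central_carry P p k = 0.
Proof.
move=> p_gt0 lt_2P_pk; have lt_P_pk : P < p ^ k by apply: leq_ltn_trans lt_2P_pk; lia.
by rewrite /central_carry (divn_small lt_2P_pk) (divn_small lt_P_pk).
Qed.

Lemma logn_central_binom P p : prime p ->
  logn p 'C(P.*2, P) = \sum_(1 <= k < P.*2.+1) central_carry P p k.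
Proof.
move=> p_pr; have p_gt0 := prime_gt0 p_pr.
have C_gt0 : 0 < 'C(P.*2, P) by rewrite bin_gt0 -addnn leq_addl.
have := congr1 (logn p) (bin_fact (leq_addl P P)).
rewrite addnK addnn !lognM ?muln_gt0 ?fact_gt0 // !logn_fact //.
have -> : \sum_(1 <= k < P.+1) P %/ p ^ k = \sum_(1 <= k < P.*2.+1) P %/ p ^ k.
  rewrite [RHS](big_cat_nat _ (n := P.+1)) //=; last lia.
  rewrite [X in _ = _ + X]big1_seq ?addn0 // => k /andP[_].
  rewrite mem_iota => /andP[le_Pk _]; rewrite divn_small //.
  exact: leq_trans le_Pk (ltnW (ltn_expl k (prime_gt1 p_pr))).
suff -> : \sum_(1 <= k < P.*2.+1) P.*2 %/ p ^ k =
    \sum_(1 <= k < P.*2.+1) central_carry P p k + \sum_(1 <= k < P.*2.+1) P %/ p ^ k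
    + \sum_(1 <= k < P.*2.+1) P %/ p ^ k by lia.
rewrite -!big_split /=; apply: eq_bigr => k _.
have pk_gt0 : 0 < p ^ k by rewrite expn_gt0 p_gt0.
by have := double_divn_bounds P pk_gt0; rewrite /central_carry; lia.
Qed.

Lemma pfactor_central_binom_le P p : prime p -> 0 < P ->
  p ^ logn p 'C(P.*2, P) <= P.*2.
Proof.
move=> p_pr P_gt0; have p_gt1 := prime_gt1 p_pr.
set e := trunc_log p P.*2.
have le_log_e : logn p 'C(P.*2, P) <= e.
  rewrite logn_central_binom //; apply: sum_le1_le_support => k.
    exact/central_carry_le1/prime_gt0.
  move=> lt_ek; apply: central_carry_eq0; first exact: prime_gt0.
  by apply: leq_trans (trunc_log_ltn _ p_gt1) _; rewrite leq_pexp2l ?prime_gt0.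
apply: leq_trans (trunc_logP p_gt1 _); last by rewrite double_gt0.
by rewrite leq_pexp2l ?prime_gt0.
Qed.

Lemma logn_central_binom_le1 P p : prime p -> P.*2 < p * p ->
  logn p 'C(P.*2, P) <= 1.
Proof.
move=> p_pr lt_2P_pp; have p_gt0 := prime_gt0 p_pr.
rewrite logn_central_binom //; apply: sum_le1_le_support => k.
  exact: central_carry_le1.
move=> lt_1k; apply: central_carry_eq0 => //; apply: leq_trans lt_2P_pp _.
by rewrite mulnn leq_pexp2l.
Qed.

Lemma logn_central_binom_eq0 P p : prime p -> P.*2 < p * p -> p <= P ->
  P.*2 < 3 * p -> logn p 'C(P.*2, P) = 0.
Proof.
move=> p_pr lt_2P_pp le_pP lt_2P_3p; have p_gt0 := prime_gt0 p_pr.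
apply/eqP; rewrite -leqn0 logn_central_binom //.
apply: sum_le1_le_support => [k|]; first exact: central_carry_le1.
move=> -[|[|k]] // _; last first.
  apply: central_carry_eq0 => //; apply: leq_trans lt_2P_pp _.
  by rewrite mulnn leq_pexp2l.
rewrite /central_carry expn1.
have -> : P %/ p = 1 by apply/anti_leq; rewrite -ltnS ltn_divLR // leq_divRL //; lia.
have -> : P.*2 %/ p = 2 by apply/anti_leq; rewrite -ltnS ltn_divLR // leq_divRL //; lia.
by [].
Qed.

Definition primorial x := \prod_(0 <= p < x.+1 | prime p) p.

Lemma odd_central_binom_le m : 'C(m.*2.+1, m) <= 4 ^ m.
Proof.
have sym : 'C(m.*2.+1, m.+1) = 'C(m.*2.+1, m).
  by rewrite -bin_sub; [congr 'C(_, _) | ]; lia.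
have : 'C(m.*2.+1, m) + 'C(m.*2.+1, m.+1) <= 2 ^ m.*2.+1.
  have -> : 2 ^ m.*2.+1 = \sum_(0 <= i < m.*2.+2) 'C(m.*2.+1, i).
    rewrite -{1}[2]/(1 + 1) expnDn big_mkord; apply: eq_bigr => i _.
    by rewrite !exp1n !muln1.
  rewrite (big_cat_nat _ (n := m)) ?(@big_ltn _ _ _ m) ?(@big_ltn _ _ _ m.+1) //=; lia.
by rewrite sym expnS -[4]/(2 ^ 2) -expnM mul2n; lia.
Qed.

Lemma prime_dvd_odd_central_binom m p : prime p -> m.+1 < p <= m.*2.+1 ->
  p %| 'C(m.*2.+1, m).
Proof.
move=> p_pr /andP[lt_m1p le_p2m1].
have le_m : m <= m.*2.+1 by lia.
have fact_eq := bin_fact le_m.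
rewrite (_ : m.*2.+1 - m = m.+1) in fact_eq; last lia.
rewrite -(@Gauss_dvdl _ _ (m`! * m.+1`!)).
  by rewrite fact_eq dvdn_fact // prime_gt0.
by rewrite coprimeMr !coprime_prime_fact //; lia.
Qed.

Lemma prod_primes_odd_central_le m :
  \prod_(m.+2 <= p < m.*2.+2 | prime p) p <= 'C(m.*2.+1, m).
Proof.
rewrite -big_filter; apply: dvdn_leq; first by rewrite bin_gt0; lia.
apply: prod_uniq_primes_dvd; [exact/filter_uniq/iota_uniq | exact: filter_all |].
apply/allP => p; rewrite mem_filter mem_index_iota => /andP[p_pr range_p].
by apply: prime_dvd_odd_central_binom => //; lia.
Qed.

Lemma primorial_le x : primorial x <= 4 ^ x.
Proof.
elim/ltn_ind: x => x IH; rewrite /primorial.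
case: (leqP x 2) => [|lt_2x]; first by case: x {IH} => [|[|[|]]] //; rewrite unlock.
have [x_odd|x_even] := boolP (odd x).
  have -> : x = x./2.*2.+1 by rewrite -[LHS]odd_double_half x_odd.
  set m := x./2; have m_gt0 : 0 < m by rewrite /m; lia.
  rewrite (big_cat_nat _ (n := m.+2)) //=; last lia.
  have -> : 4 ^ m.*2.+1 = 4 ^ m.+1 * 4 ^ m by rewrite -expnD; congr (_ ^ _); lia.
  apply: leq_mul; first by apply: IH; rewrite /m; lia.
  exact: leq_trans (prod_primes_odd_central_le m) (odd_central_binom_le m).
have x_np : ~~ prime x by apply: contra x_even => /even_prime [|->] //; lia.
rewrite big_mkcond big_nat_recr //= -big_mkcond /= (negbTE x_np) muln1.
apply: leq_trans (_ : 4 ^ x.-1 <= 4 ^ x); last by rewrite leq_exp2l // leq_pred.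
have := IH x.-1; rewrite /primorial prednK; [apply; lia | lia].
Qed.

Lemma central_binom_ge P : 0 < P -> 4 ^ P <= P.*2 * 'C(P.*2, P).
Proof.
elim: P => [//|[_|P IH _]]; first by [].
have {IH} := IH isT; set Q := P.+1.
have sym : 'C(Q.*2.+1, Q.+1) = 'C(Q.*2.+1, Q).
  by rewrite -bin_sub; [congr 'C(_, _) | ]; lia.
have := mul_bin_diag Q.*2.+1 Q; rewrite /= sym.
rewrite doubleS binS sym expnS; nia.
Qed.

Lemma prod_pfactor_eq n b : 0 < n -> (forall p, b <= p -> logn p n = 0) ->
  \prod_(0 <= p < b) p ^ logn p n = n.
Proof.
move=> n_gt0 logn_eq0.
rewrite -[RHS](partnT n_gt0) (widen_partn _ (leq_maxl n b)) big_mkcond /=.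
rewrite [RHS](big_cat_nat _ (n := b)) //= ?(leqW (leq_maxr n b)) //.
rewrite [X in _ = _ * X]big1_seq ?muln1 // => p /andP[_].
by rewrite mem_index_iota => /andP[le_bp _]; rewrite logn_eq0.
Qed.

Lemma central_binom_factor P : 0 < P ->
  \prod_(0 <= p < P.*2.+1) p ^ logn p 'C(P.*2, P) = 'C(P.*2, P).
Proof.
move=> P_gt0; apply: prod_pfactor_eq => [|p lt_2Pp]; first by rewrite bin_gt0 -addnn leq_addl.
have [p_pr|p_npr] := boolP (prime p); last by rewrite lognE (negbTE p_npr).
have := pfactor_central_binom_le p_pr P_gt0.
case: (logn p _) => // e; rewrite expnS => le_pe_2P.
by have := expn_gt0 p e; rewrite prime_gt0 //=; nia.
Qed.

Section CentralBinomRanges.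

Variable P : nat.
Hypothesis P_gt0 : 0 < P.
Let C := 'C(P.*2, P).

Lemma prod_pfactor_central_le a b :
  \prod_(a <= p < b) p ^ logn p C <= P.*2 ^ count prime (index_iota a b).
Proof.
rewrite -iter_muln_1 -big_const_seq [leqRHS]big_mkcond /=.
apply: leq_prod => p _; have [p_pr|p_npr] := boolP (prime p).
  exact: pfactor_central_binom_le.
by rewrite lognE (negbTE p_npr).
Qed.

Lemma prod_pfactor_central_mid s : P.*2 < s * s ->
  \prod_(s <= p < (P.*2 %/ 3).+1) p ^ logn p C <= 4 ^ (P.*2 %/ 3).
Proof.
move=> lt_2P_ss; apply: leq_trans (primorial_le _); rewrite /primorial.
have [le_sd|lt_ds] := leqP s (P.*2 %/ 3).+1; last first.
  by rewrite big_geq ?(ltnW lt_ds) // prodn_cond_gt0 // => p /prime_gt0.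
rewrite [X in _ <= X](big_cat_nat _ (n := s)) //= [X in _ * X]big_mkcond /=.
apply: leq_trans (leq_pmull _ _); last by apply: prodn_cond_gt0 => p /prime_gt0.
rewrite big_seq [X in _ <= X]big_seq; apply: leq_prod => p.
rewrite mem_index_iota => /andP[le_sp _].
have [p_pr|p_npr] := boolP (prime p); last by rewrite lognE (negbTE p_npr).
have : logn p C <= 1.
  apply: logn_central_binom_le1 => //; apply: leq_trans lt_2P_ss _; exact: leq_mul.
by case: (logn p C) => [|[|]] //= _; rewrite ?expn1 ?prime_gt0.
Qed.

Lemma prod_pfactor_central_gap s : P.*2 < s * s -> s <= (P.*2 %/ 3).+1 ->
  \prod_((P.*2 %/ 3).+1 <= p < P.+1) p ^ logn p C = 1.
Proof.
move=> lt_2P_ss le_sd; apply: big1_seq => p; rewrite mem_index_iota => /andP[_ /andP[lb ub]].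
have [p_pr|p_npr] := boolP (prime p); last by rewrite lognE (negbTE p_npr).
rewrite logn_central_binom_eq0 //; try lia.
apply: leq_trans lt_2P_ss _; apply: leq_mul; lia.
Qed.

Lemma central_binom_le s : P.*2 < s * s -> s <= (P.*2 %/ 3).+1 ->
  C <= P.*2 ^ s * 4 ^ (P.*2 %/ 3) * P.*2 ^ size (primes_in P).
Proof.
move=> lt_2P_ss le_sd; have lt_dP : P.*2 %/ 3 < P.+1 by rewrite ltn_divLR //; lia.
rewrite /C -{1}(central_binom_factor P_gt0) -/C.
rewrite (big_cat_nat _ (n := s)) //=; last lia.
rewrite (@big_cat_nat _ _ _ (P.*2 %/ 3).+1 s) //=; last lia.
rewrite (@big_cat_nat _ _ _ P.+1 (P.*2 %/ 3).+1) //=; last lia.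
rewrite (prod_pfactor_central_gap lt_2P_ss le_sd) mul1n -!mulnA.
apply: leq_mul; first by apply: leq_trans (prod_pfactor_central_le 0 s) _;
  rewrite leq_pexp2l ?double_gt0 // /index_iota subn0 -[leqRHS](size_iota 0 s) count_size.
apply: leq_mul; first exact: prod_pfactor_central_mid.
apply: leq_trans (prod_pfactor_central_le P.+1 P.*2.+1) _.
rewrite leq_pexp2l ?double_gt0 // /primes_in size_filter /index_iota.
by rewrite subSS -addnn addnK /= leq_addl.
Qed.

End CentralBinomRanges.

Lemma log_sqrt_le_pow2 l : 15 <= l -> 3 * (l + 2) * (2 ^ (l./2 + 2)).+1 <= 2 ^ l.
Proof.
elim/ltn_ind: l => l IH le15l.
have [le_l16|lt16l] := leqP l 16.
  by have /orP[/eqP->|/eqP->] : (l == 15) || (l == 16) by lia.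
have [a def_l] : exists a, l = a.+2 by exists (l - 2); lia.
have lt14a : 14 < a by lia.
have := IH a; rewrite def_l /= addSn !expnS => /(_ (ltnW (ltnSn _)) lt14a).
set y := 2 ^ (a./2 + 2); set z := 2 ^ a; nia.
Qed.

Lemma primes_in_lower_large P : 2 ^ 15 <= P ->
  P <= 3 * (trunc_log 2 P + 2) * size (primes_in P).
Proof.
move=> le15P; have P_gt0 : 0 < P by apply: leq_trans le15P; rewrite expn_gt0.
set l := trunc_log 2 P; set A := l + 2; set N := size _.
(* A power of 2 above sqrt(2P): primes below s may divide 'C(2P, P) to high powers. *)
set s := 2 ^ (l./2 + 2).
have le_2l_P : 2 ^ l <= P := trunc_logP (isT : 1 < 2) P_gt0.
have lt_P_2l1 : P < 2 ^ l.+1 := trunc_log_ltn P (isT : 1 < 2).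
have budget := log_sqrt_le_pow2 (trunc_log_max (isT : 1 < 2) le15P).
rewrite -/l -/s -/A in budget.
have le_2P_2A : P.*2 <= 2 ^ A by rewrite /A addn2 expnS; lia.
have lt_2P_ss : P.*2 < s * s.
  apply: leq_trans (_ : 2 ^ l.+2 <= _); first by rewrite expnS; lia.
  by rewrite -expnD leq_exp2l //; have := odd_double_half l; case: (odd l) => /=; lia.
have le_sd : s <= (P.*2 %/ 3).+1.
  have : 3 * s.+1 <= 3 * A * s.+1 by rewrite leq_mul2r /A; lia.
  by move/leq_trans/(_ budget); lia.
clearbody A.
have pow_le k : P.*2 ^ k <= 2 ^ (A * k).
  by rewrite expnM; case: k => [|k]; rewrite ?expn0 ?leq_exp2r.
have pow4 k : 4 ^ k = 2 ^ k.*2 by rewrite -[4]/(2 ^ 2) -expnM mul2n.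
have : 2 ^ P.*2 <= 2 ^ (A + A * s + (P.*2 %/ 3).*2 + A * N).
  rewrite -pow4 !expnD -!pow4; apply: leq_trans (central_binom_ge P_gt0) _.
  rewrite -!mulnA; apply: leq_mul; first exact: le_2P_2A.
  apply: leq_trans (central_binom_le P_gt0 lt_2P_ss le_sd) _.
  rewrite -mulnA; apply: leq_mul; first exact: pow_le.
  by apply: leq_mul; last exact: pow_le.
rewrite leq_exp2l //; nia.
Qed.

Lemma mem_primes_in P q : (q \in primes_in P) = prime q && (P <= q <= P.*2).
Proof. by rewrite mem_filter mem_iota addnS ltnS addnn. Qed.

Lemma size_primes_in_le P : size (primes_in P) <= P.+1.
Proof. by rewrite size_filter -[leqRHS](size_iota P) count_size. Qed.

Lemma primes_in_gt0_chain q (qs : seq nat) P :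
  all prime (q :: qs) -> path (fun a b => b <= a.+1.*2) q qs ->
  q <= P.*2 -> P <= last q qs -> 0 < size (primes_in P).
Proof.
elim: qs q => [|q' qs IH] q /= /andP[q_pr qs_pr].
  move=> _ le_q_2P le_Pq; rewrite -has_predT; apply/hasP.
  by exists q; rewrite ?mem_primes_in ?q_pr ?le_Pq.
move=> /andP[le_q'_2q chain] le_q_2P le_P_last.
have [le_Pq|lt_qP] := leqP P q.
  by rewrite -has_predT; apply/hasP; exists q; rewrite ?mem_primes_in ?q_pr ?le_Pq.
by apply: IH chain _ le_P_last => //; lia.
Qed.

Lemma primes_in_gt0_small P : 2 <= P -> P < 2 ^ 15 -> 0 < size (primes_in P).
Proof.
move=> le2P lt_P_215.
apply: (@primes_in_gt0_chain 2
  [:: 3; 5; 11; 23; 47; 89; 179; 359; 719; 1439; 2879; 5749; 11497; 22993; 45979]).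
- by vm_compute.
- by vm_compute.
- lia.
- by apply: leq_trans (ltnW lt_P_215) _; vm_compute.
Qed.

Lemma primes_in_lower P : 2 <= P ->
  P <= 2 ^ 15 * (trunc_log 2 P + 2) * size (primes_in P).
Proof.
move=> le2P; have [le15P|lt_P_215] := leqP (2 ^ 15) P.
  apply: leq_trans (primes_in_lower_large le15P) _.
  by apply: leq_mul => //; apply: leq_mul.
have := primes_in_gt0_small le2P lt_P_215.
move: lt_P_215; set c := 2 ^ 15; set N := size _; nia.
Qed.

Lemma primes_density_ge n P : 0 < n -> 2 <= P -> P <= 2 ^ n.+1 ->
  8 * P * (3 + n %/ trunc_log 2 P) <= 120 * 2 ^ 15 * n * size (primes_in P).
Proof.
move=> n_gt0 le2P le_P_2n; have := primes_in_lower le2P.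
set l := trunc_log 2 P; set L := n %/ l; set N := size _; set C := 2 ^ 15.
have l_gt0 : 0 < l by rewrite trunc_log_gt0.
have le_ln : l <= n.+1.
  by rewrite -(leq_exp2l _ _ (isT : 1 < 2)); apply: leq_trans le_P_2n; apply: trunc_logP; lia.
have le_Ll_n : L * l <= n by apply: leq_divM.
have : (l + 2) * (3 + L) <= 15 * n by nia.
move=> budget le_P; apply: leq_trans (_ : 8 * (C * (l + 2) * N) * (3 + L) <= _).
  by rewrite leq_mul2r leq_mul2l le_P !orbT.
have -> : 8 * (C * (l + 2) * N) * (3 + L) = 8 * C * N * ((l + 2) * (3 + L)) by ring.
have -> : 120 * C * n * N = 8 * C * N * (15 * n) by ring.
by rewrite leq_mul2l budget orbT.
Qed.

(** * Heavy sums in residue classes *)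

Lemma sum_eq_mod (F : nat -> nat) p t : 0 < p ->
  \sum_(r < p) (t %% p == r) * F r = F (t %% p).
Proof.
move=> p_gt0; rewrite (bigD1 (Ordinal (ltn_pmod t p_gt0))) //= eqxx mul1n big1 ?addn0 //.
by move=> r; rewrite -val_eqE /= eq_sym => /negbTE ->.
Qed.

Lemma count_mod_eq_lt n P (ps : seq nat) a b : 0 < P ->
  uniq ps -> all prime ps -> {in ps, forall p, P <= p} ->
  a != b -> a < 2 ^ n -> b < 2 ^ n ->
  count (fun p => a %% p == b %% p) ps * trunc_log 2 P < n.
Proof.
move=> P_gt0 ps_uniq ps_pr ps_ge.
wlog lt_ba : a b / b < a => [hwlog|_ lt_a lt_b].
  move=> neq_ab lt_a lt_b; have [lt_ab|lt_ba|eq_ab] := ltngtP a b.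
  - rewrite (eq_count (a2 := fun p => b %% p == a %% p)) => [|p]; last exact: eq_sym.
    by apply: hwlog; rewrite // eq_sym.
  - exact: hwlog.
  - by rewrite eq_ab eqxx in neq_ab.
rewrite -size_filter; set qs := filter _ ps.
have dvd_ab : \prod_(p <- qs) p %| a - b.
  apply: prod_uniq_primes_dvd; first exact: filter_uniq.
    by apply/allP => p; rewrite mem_filter => /andP[_ /(allP ps_pr)].
  by apply/allP => p; rewrite mem_filter => /andP[eq_ab _]; rewrite -eqn_mod_dvd // ltnW.
have le_Pqs : P ^ size qs <= \prod_(p <- qs) p.
  rewrite -iter_muln_1 -[size qs]count_predT -big_const_seq big_seq_cond [leqRHS]big_seq_cond.
  by apply: leq_prod => p /andP[]; rewrite mem_filter => /andP[_ /ps_ge].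
have le_2l_P : 2 ^ (trunc_log 2 P * size qs) <= P ^ size qs.
  by rewrite expnM; case: (size qs) => [|e]; rewrite ?expn0 ?leq_exp2r ?trunc_logP.
rewrite mulnC -(ltn_exp2l _ _ (isT : 1 < 2)).
apply: leq_ltn_trans le_2l_P _; apply: leq_ltn_trans le_Pqs _.
apply: leq_ltn_trans (dvdn_leq _ dvd_ab) _; rewrite ?subn_gt0 //; lia.
Qed.

Lemma sum_nat_bool_count (T : Type) (a : pred T) (s : seq T) :
  \sum_(x <- s) (a x : nat) = count a s.
Proof. by rewrite -sum1_count [RHS]big_mkcond; apply: eq_bigr => x _; case: (a x). Qed.

Section ResidueCounts.

Variables (M : nat) (X : {set 'I_M}).

Definition res_count p r := #|[set t in X | t %% p == r]|.

Lemma res_countE p r : res_count p r = \sum_(t in X) (t %% p == r).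
Proof.
rewrite /res_count -sum1_card big_mkcond [RHS]big_mkcond; apply: eq_bigr => t _.
by rewrite inE; case: (t \in X); case: eqP.
Qed.

Lemma sum_res_count p : 0 < p -> \sum_(r < p) res_count p r = #|X|.
Proof.
move=> p_gt0; under eq_bigr do rewrite res_countE.
rewrite exchange_big /= -sum1_card; apply: eq_bigr => t _.
by rewrite -[RHS](sum_eq_mod (fun=> 1) t p_gt0); apply: eq_bigr => r _; rewrite muln1.
Qed.

Lemma sum_res_count_sq p : 0 < p ->
  \sum_(r < p) res_count p r ^ 2 = \sum_(t in X) \sum_(t' in X) (t %% p == t' %% p).
Proof.
move=> p_gt0; rewrite (eq_bigr (fun r : 'I_p =>
  \sum_(t in X) \sum_(t' in X) (t %% p == r) * (t' %% p == r))); last first.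
  by move=> r _; rewrite -mulnn res_countE big_distrlr.
rewrite exchange_big; apply: eq_bigr => t _; rewrite exchange_big; apply: eq_bigr => t' _.
by rewrite eq_sym -(sum_eq_mod (fun r => (t' %% p == r) : nat) t p_gt0).
Qed.

Lemma sum_res_count_sq_le (ps : seq nat) L : {in ps, forall p, 0 < p} ->
  (forall t t' : 'I_M, t != t' -> count (fun p => t %% p == t' %% p) ps <= L) ->
  \sum_(p <- ps) \sum_(r < p) res_count p r ^ 2 <= #|X| * (size ps + #|X| * L).
Proof.
move=> ps_gt0 collisions.
rewrite big_seq (eq_bigr _ (fun p p_ps => sum_res_count_sq (ps_gt0 p p_ps))) -big_seq.
rewrite exchange_big -sum_nat_const; apply: leq_sum => t t_X.
rewrite exchange_big (bigD1 t) //= sum_nat_bool_count; apply: leq_add.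
  by rewrite (eq_count (a2 := predT)) ?count_predT // => p /=; rewrite eqxx.
rewrite -sum_nat_const [leqLHS]big_mkcond [leqRHS]big_mkcond; apply: leq_sum => t' _.
rewrite sum_nat_bool_count; case: (t' \in X) => //=; case: eqP => // /eqP neq_t't.
by apply: collisions; rewrite eq_sym.
Qed.

End ResidueCounts.

Definition heavy_set n (w : 'I_n -> nat) j : {set 'I_(2 ^ n)} :=
  [set t : 'I_(2 ^ n) | 2 ^ j < freq w t].

Lemma res_count_heavy_le n (w : 'I_n -> nat) j p r :
  res_count (heavy_set w j) p r <= num_good_t w p r (2 ^ j + 1).
Proof.
apply: subset_leq_card; apply/subsetP => t; rewrite !inE => /andP[heavy /eqP t_r].
rewrite addn1 (leq_trans heavy) // subset_leq_card //; apply/subsetP => S.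
by rewrite !inE => /eqP w_t; rewrite w_t t_r !eqxx.
Qed.

Lemma num_heavy_le n (w : 'I_n -> nat) j : num_heavy w j <= 2 ^ n.
Proof. by rewrite -[leqRHS]card_ord max_card. Qed.

Local Open Scope ring_scope.

(* Expand [0 <= sum over the r with c r >= k of (1 - mu c r)^2]; the r with
   c r < k carry at most half of the total mass. *)
Lemma card_ge_second_moment (R : realFieldType) p (c : 'I_p -> nat) (k : int) (mu : R) :
  1 <= k -> p%:R * (k - 1)%:~R <= (\sum_(r < p) c r)%N%:R / 2 :> R -> 0 <= mu ->
  mu * (\sum_(r < p) c r)%N%:R - mu ^+ 2 * (\sum_(r < p) c r ^ 2)%N%:R
    <= #|[set r | k <= (c r)%:Z]|%:R.
Proof.
move=> k_ge1 small_bad mu_ge0.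
set x := (\sum_(r < p) c r)%N; set good := fun r : 'I_p => k <= (c r)%:Z.
set S := \sum_(r < p | good r) ((c r)%:R : R).
set Q := \sum_(r < p | good r) ((c r)%:R ^+ 2 : R).
have -> : #|[set r | k <= (c r)%:Z]|%:R = \sum_(r < p | good r) (1 : R).
  by rewrite sumr_const cardsE.
have : 0 <= \sum_(r < p | good r) (1 - mu * (c r)%:R) ^+ 2.
  by apply: sumr_ge0 => r _; apply: sqr_ge0.
have -> : \sum_(r < p | good r) (1 - mu * (c r)%:R) ^+ 2 =
    \sum_(r < p | good r) (1 : R) - 2 * mu * S + mu ^+ 2 * Q.
  rewrite (eq_bigr (fun r => 1 - 2 * mu * (c r)%:R + mu ^+ 2 * (c r)%:R ^+ 2)).
    by rewrite big_split /= sumrB -!mulr_sumr.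
  by move=> r _; ring.
have le_Q : Q <= (\sum_(r < p) c r ^ 2)%N%:R.
  rewrite natr_sum /Q big_mkcond /=; apply: ler_sum => r _.
  by case: (good r); rewrite natrX ?sqr_ge0.
have le_S : x%:R / 2 <= S.
  have bad_le : \sum_(r < p | ~~ good r) ((c r)%:R : R) <= p%:R * (k - 1)%:~R.
    apply: le_trans (_ : _ <= \sum_(r < p) ((k - 1)%:~R : R)) _; last first.
      by rewrite sumr_const card_ord mulr_natl.
    rewrite big_mkcond /=; apply: ler_sum => r _.
    case: ifP => [bad|_]; last by rewrite ler0z subr_ge0.
    have : (c r)%:Z <= k - 1 by move: bad; rewrite /good -ltNge; lia.
    by rewrite -(ler_int R).
  have : x%:R = S + \sum_(r < p | ~~ good r) ((c r)%:R : R) :> R.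
    by rewrite natr_sum (bigID good).
  lra.
have : mu * (x%:R / 2) <= mu * S by apply: ler_wpM2l.
have : mu ^+ 2 * Q <= mu ^+ 2 * (\sum_(r < p) c r ^ 2)%N%:R.
  by apply: ler_wpM2l => //; apply: sqr_ge0.
nra.
Qed.

Lemma quadratic_max_le (R : realFieldType) (a b S : R) : 0 <= a -> 0 < b ->
  (forall mu, 0 <= mu -> mu * a - mu ^+ 2 * b <= S) -> a ^+ 2 / (4 * b) <= S.
Proof.
move=> a_ge0 b_gt0 quad_le; have := quad_le (a / (2 * b)).
have -> : a / (2 * b) * a - (a / (2 * b)) ^+ 2 * b = a ^+ 2 / (4 * b).
  by field; rewrite gt_eqF.
by apply; rewrite divr_ge0 // mulr_ge0 // ltW.
Qed.

Lemma sum_card_res_count_ge (R : realFieldType) M (X : {set 'I_M}) (ps : seq nat)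
    L (k : int) :
  {in ps, forall p, 0 < p}%N ->
  (forall t t' : 'I_M, t != t' -> count (fun p => t %% p == t' %% p) ps <= L)%N ->
  (0 < #|X|)%N -> (size ps <= 3 * #|X|)%N -> 1 <= k ->
  {in ps, forall p, p%:R * (k - 1)%:~R <= #|X|%:R / 2 :> R} ->
  (size ps)%:R ^+ 2 / (4 * (3 + L%:R)) <=
    \sum_(p <- ps) #|[set r : 'I_p | k <= (res_count X p r)%:Z]|%:R :> R.
Proof.
move=> ps_gt0 collisions X_gt0 N_le k_ge1 small_bad.
set x := #|X|; set N := size ps.
have x_gt0 : 0 < x%:R :> R by rewrite ltr0n.
have L3_gt0 : 0 < 3 + L%:R :> R by rewrite ltr_wpDr.
have -> : N%:R ^+ 2 / (4 * (3 + L%:R)) =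
    (x%:R * N%:R) ^+ 2 / (4 * (x%:R ^+ 2 * (3 + L%:R))) :> R.
  by field; rewrite !gt_eqF.
apply: quadratic_max_le => [||mu mu_ge0]; first exact: mulr_ge0.
  by rewrite mulr_gt0 ?exprn_gt0.
have second_moment := sum_res_count_sq_le X ps_gt0 collisions.
apply: le_trans (_ : \sum_(p <- ps) (mu * x%:R -
    mu ^+ 2 * (\sum_(r < p) res_count X p r ^ 2)%N%:R) <= _).
  rewrite sumrB big_const_seq count_predT iter_addr_0 -[_ *+ size ps]mulr_natr.
  rewrite -mulr_sumr -natr_sum.
  have T_le : (\sum_(p <- ps) \sum_(r < p) res_count X p r ^ 2)%N%:R
      <= x%:R ^+ 2 * (3 + L%:R) :> R.
    apply: le_trans (_ : (x * (N + x * L))%N%:R <= _); first by rewrite ler_nat.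
    have : N%:R <= 3 * x%:R :> R by rewrite -natrM ler_nat.
    rewrite natrM natrD natrM; nra.
  have := ler_wpM2l (sqr_ge0 mu) T_le; lra.
rewrite big_seq [leRHS]big_seq; apply: ler_sum => p p_ps.
have sum_p : (\sum_(r < p) res_count X p r)%N = x by apply: sum_res_count; apply: ps_gt0.
rewrite -{1}sum_p; apply: card_ge_second_moment => //.
by rewrite sum_p; apply: small_bad.
Qed.

Lemma count_primes_in_mod_eq_le n P (t t' : 'I_(2 ^ n)) : (2 <= P)%N -> t != t' ->
  (count (fun p => t %% p == t' %% p) (primes_in P) <= n %/ trunc_log 2 P)%N.
Proof.
move=> le2P neq_tt'; have l_gt0 : (0 < trunc_log 2 P)%N by rewrite trunc_log_gt0.
rewrite leq_divRL // ltnW // count_mod_eq_lt //; try lia.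
- exact/filter_uniq/iota_uniq.
- exact: filter_all.
- by move=> p; rewrite mem_primes_in => /and3P[].
Qed.

Lemma sum_card_res_count_heavy_le (R : realFieldType) n (w : 'I_n -> nat) j P (k : int) :
  (0 < P)%N ->
  \sum_(p <- primes_in P)
      #|[set r : 'I_p | k <= (res_count (heavy_set w j) p r)%:Z]|%:R / (2 * P%:R)
    <= \sum_(p <- primes_in P)
      #|[set r : 'I_p | k <= (num_good_t w p r (2 ^ j + 1))%:Z]|%:R / p%:R :> R.
Proof.
move=> P_gt0; have PR_gt0 : 0 < P%:R :> R by rewrite ltr0n.
rewrite big_seq [leRHS]big_seq; apply: ler_sum => p.
rewrite mem_primes_in => /and3P[/prime_gt0 p_gt0 _ le_p_2P].
set A := #|_|.
apply: (@le_trans _ _ (A%:R / p%:R)).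
  apply: ler_wpM2l => //; rewrite lef_pV2 ?posrE ?ltr0n ?mulr_gt0 //.
  by rewrite -natrM ler_nat mul2n.
apply: ler_wpM2r; rewrite ?invr_ge0 ?ler0n // ler_nat.
apply: subset_leq_card; apply/subsetP => r.
by rewrite !inE => /le_trans; apply; rewrite lez_nat res_count_heavy_le.
Qed.

Lemma success_prob_ge (R : realType) n (w : 'I_n -> nat) j P (k : int) :
  (2 <= P)%N -> (P <= (num_heavy w j).*2)%N -> 1 <= k ->
  {in primes_in P, forall p, p%:R * (k - 1)%:~R <= (num_heavy w j)%:R / 2 :> R} ->
  (size (primes_in P))%:R / (8 * P%:R * (3 + (n %/ trunc_log 2 P)%:R))
    <= success_prob R w P (2 ^ j + 1) k.
Proof.
move=> le2P le_P_2x k_ge1 small_bad.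
set ps := primes_in P; set N := size ps; set L := (n %/ trunc_log 2 P)%N.
have ps_gt0 : {in ps, forall p, 0 < p}%N.
  by move=> p; rewrite mem_primes_in => /andP[/prime_gt0].
have x_gt0 : (0 < num_heavy w j)%N by lia.
have N_le : (N <= 3 * num_heavy w j)%N.
  by have := size_primes_in_le P; rewrite -/ps -/N; lia.
have sum_A_ge := sum_card_res_count_ge (R := R) (X := heavy_set w j) ps_gt0
  (fun t t' => count_primes_in_mod_eq_le le2P) x_gt0 N_le k_ge1 small_bad.
have sum_A_le_G := sum_card_res_count_heavy_le R w j k (ltnW le2P).
rewrite /success_prob -/ps -/N; have [N_eq0|N_gt0] := posnP N.
  rewrite N_eq0 mul0r mulr_ge0 ?invr_ge0 ?ler0n //.
  by apply: sumr_ge0 => p _; rewrite divr_ge0.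
apply: le_trans (ler_wpM2l _ sum_A_le_G); last by rewrite invr_ge0.
have -> : N%:R / (8 * P%:R * (3 + L%:R)) =
    N%:R^-1 * (N%:R ^+ 2 / (4 * (3 + L%:R)) / (2 * P%:R)) :> R.
  have L3_gt0 : 0 < 3 + L%:R :> R by have := ler0n R L; lra.
  by field; rewrite !gt_eqF ?ltr0n //; lia.
rewrite -mulr_suml; apply: ler_wpM2l; first by rewrite invr_ge0.
by apply: ler_wpM2r; rewrite ?invr_ge0 ?mulr_ge0 ?ler0n.
Qed.

Lemma mul_pred_ceil_le (R : archiFieldType) (a : R) (x P p : nat) :
  (0 < P)%N -> (p <= P.*2)%N -> a <= x%:R ->
  p%:R * (Num.ceil (a / (4 * P%:R)) - 1)%:~R <= x%:R / 2 :> R.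
Proof.
move=> P_gt0 le_p_2P le_ax; set b := (_ - 1)%:~R.
have PR_gt0 : 0 < P%:R :> R by rewrite ltr0n.
have lt_b : b * (4 * P%:R) < a by rewrite -ltr_pdivlMr ?mulr_gt0 // ceilB1_lt.
have le_pR : p%:R <= 2 * P%:R :> R by rewrite -natrM ler_nat mul2n.
have := ler0n R p; have := ler0n R x; have [b_ge0|b_lt0] := lerP 0 b; nra.
Qed.

Lemma invfM_le_div (R : realFieldType) (K n N D : R) : 0 < K -> 0 < n -> 0 < D ->
  D <= K * n * N -> K^-1 / n <= N / D.
Proof.
move=> K_gt0 n_gt0 D_gt0 le_D.
by rewrite -invfM ler_pdivlMr // mulrC ler_pdivrMr ?mulr_gt0 // mulrC.
Qed.

Theorem lemma3p6 :
  exists c : rat, 0 < c /\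
  forall (R : realType) (n : nat) (w : 'I_n -> nat) (Delta : R) (j P : nat),
    (forall i : 'I_n, (0 < w i)%N) ->
    (forall i i' : 'I_n, (i < i')%N -> (w i < w i')%N) ->
    (\sum_(i < n) w i < 2 ^ n - 1)%N ->
    Num.sqrt (2 ^+ n) <= Delta ->
    Delta <= (dpar w)%:R ->
    (dpar w < 2 ^ n)%N ->
    (j < n)%N ->
    Delta / (2 ^ j.+1 * n)%:R < (num_heavy w j)%:R ->
    let h := (2 ^ j + 1)%N in
    let m : int := Num.ceil (Delta / (2 ^ j.+1 * n)%:R) in
    (2 <= P)%N ->
    (P%:Z <= 2 * m) ->
    let k : int := Num.ceil (m%:~R / (4 * P%:R) : R) in
    ratr c / n%:R <= success_prob R w P h k.
Proof.
exists (120 * 2 ^ 15)%:R^-1; split; first by rewrite invr_gt0 ltr0n.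
(* Only the abundance of heavy sums matters. *)
move=> R n w Delta j P _ _ _ _ _ _ lt_jn heavy_gt h m le2P le_P_2m.
cbv zeta; set k := Num.ceil _.
rewrite fmorphV rmorph_nat.
have n_gt0 : (0 < n)%N by lia.
have le_m_x : m <= (num_heavy w j)%:Z by rewrite ceil_le_int ltW.
have le_P_2x : (P <= (num_heavy w j).*2)%N by lia.
have k_ge1 : 1 <= k.
  by rewrite -gtz0_ge1 ceil_gt0 divr_gt0 ?mulr_gt0 ?ltr0n ?ltr0z //; lia.
have small_bad : {in primes_in P, forall p,
    p%:R * (k - 1)%:~R <= (num_heavy w j)%:R / 2 :> R}.
  move=> p; rewrite mem_primes_in => /and3P[_ _ le_p_2P].
  by apply: mul_pred_ceil_le => //; [lia | rewrite -(ler_int R) in le_m_x].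
apply: le_trans (success_prob_ge le2P le_P_2x k_ge1 small_bad).
have le_P_2n : (P <= 2 ^ n.+1)%N by have := num_heavy_le w j; rewrite expnS; lia.
have := primes_density_ge n_gt0 le2P le_P_2n; rewrite -(ler_nat R) !natrM natrD.
by apply: invfM_le_div; rewrite ?mulr_gt0 -?natrD ?ltr0n //; lia.
Qed.
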